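(* Let $(A,\mathfrak m)$ be a Cohen–Macaulay local ring of dimension $d\ge2$ with infinite residue field, let $x_1,\dots,x_d$ be an $A$-superficial sequence, $J=(x_1,\dots,x_d)$, and $(B,\mathfrak n)=(A/(x_1),\mathfrak m/(x_1))$. For an ideal $I$ of $A$ write $\overline I$ for its image in $B$. Since $\overline{\widetilde{\mathfrak m^i}}\subseteq\widetilde{\mathfrak n^i}$, there are natural maps $\eta_i:\widetilde{\mathfrak m^{i+1}}/J\widetilde{\mathfrak m^i}\to\widetilde{\mathfrak n^{i+1}}/\overline J\,\widetilde{\mathfrak n^i}$, $p+J\widetilde{\mathfrak m^i}\mapsto \overline p+\overline J\widetilde{\mathfrak n^i}$, for all $i\ge0$. Then: (1) if $\overline{\widetilde{\mathfrak m^s}}=\widetilde{\mathfrak n^s}$ for some $s$, then $\eta_s$ is injective; (2) if $\overline{\widetilde{\mathfrak m^j}}=\widetilde{\mathfrak n^j}$ for $j=s,s+1$, then $\eta_s$ is bijective.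
   Context: An element $x\in\mathfrak m$ is $A$-superficial if there are $c,n_0$ with $(\mathfrak m^{n+1}:x)\cap\mathfrak m^c=\mathfrak m^n$ for all $n\ge n_0$; a sequence $x_1,\dots,x_r$ is $A$-superficial if $x_1$ is $A$-superficial and $x_i$ is $A/(x_1,\dots,x_{i-1})$-superficial for $i\ge2$. For a local ring $(R,\mathfrak q)$ of positive depth, the Ratliff–Rush closure is $\widetilde{\mathfrak q^i}=\bigcup_{k\ge1}(\mathfrak q^{i+k}:\mathfrak q^k)$ for $i\ge1$, with $\widetilde{\mathfrak q^0}=R$. *)

From mathcomp Require Import all_boot all_order all_algebra.
Set Implicit Arguments. Unset Strict Implicit. Unset Printing Implicit Defensive.
Import GRing.Theory.
Local Open Scope ring_scope.

Section IdealDefs.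
Variable R : comNzRingType.
Implicit Types (I K m : R -> Prop) (s : seq R).

Definition is_ideal I :=
  I 0 /\ (forall a b, I a -> I b -> I (a + b)) /\ (forall r a, I a -> I (r * a)).

Definition prime_ideal P := is_ideal P /\ ~ P 1 /\ (forall a b, P (a * b) -> P a \/ P b).

Definition gen s : R -> Prop :=
  fun x => exists c : 'I_(size s) -> R, x = \sum_(i < size s) c i * s`_i.

Definition idadd I K : R -> Prop := fun x => exists a b, I a /\ K b /\ x = a + b.
Definition idmul I K : R -> Prop :=
  fun x => exists (n : nat) (a b : 'I_n -> R),
    (forall i, I (a i)) /\ (forall i, K (b i)) /\ x = \sum_(i < n) a i * b i.

Fixpoint idpow I (n : nat) : R -> Prop :=
  match n with 0 => fun _ => True | n'.+1 => idmul I (idpow I n') end.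

(* Ratliff--Rush closure of I^i : union over k >= 1 of (I^(i+k) : I^k); = R for i = 0 *)
Definition rr I (i : nat) : R -> Prop :=
  match i with
  | 0 => fun _ => True
  | _ => fun a => exists k, (0 < k)%N /\ forall y, idpow I k y -> idpow I (i + k) (a * y)
  end.

Definition noetherian :=
  forall I, is_ideal I -> exists s, forall x, I x <-> gen s x.

Definition local_ring m :=
  noetherian /\ is_ideal m /\ ~ m 1 /\ (forall a, ~ m a -> exists b, a * b = 1).

Definition prime_chain (P : nat -> R -> Prop) (n : nat) :=
  forall i, (i <= n)%N -> prime_ideal (P i) /\
    ((i < n)%N -> (forall a, P i a -> P i.+1 a) /\ exists a, P i.+1 a /\ ~ P i a).

Definition krull_dim (d : nat) :=
  (exists P, prime_chain P d) /\ forall P, ~ prime_chain P d.+1.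

Definition regular_seq m s :=
  (forall i, (i < size s)%N -> m s`_i) /\
  (forall i, (i < size s)%N -> forall a, gen (take i s) (s`_i * a) -> gen (take i s) a).

(* Cohen--Macaulay local ring: depth (= sup of lengths of m-regular sequences) equals dim *)
Definition cohen_macaulay m :=
  local_ring m /\ exists d, krull_dim d /\ exists s, size s = d /\ regular_seq m s.

Definition infinite_residue_field m :=
  exists f : nat -> R, forall i j, i <> j -> ~ m (f i - f j).

(* x is (R/K)-superficial, expressed through preimages in R of ideals of R/K:
   the image of m^n in R/K has preimage m^n + K. *)
Definition superficial_mod K m (x : R) :=
  m x /\ exists c n0 : nat, forall n, (n0 <= n)%N -> forall a,
    (idadd (idpow m n.+1) K (x * a) /\ idadd (idpow m c) K a) <-> idadd (idpow m n) K a.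

Definition superficial_seq m s :=
  forall i, (i < size s)%N -> superficial_mod (gen (take i s)) m s`_i.

End IdealDefs.

Definition img (A B : Type) (f : A -> B) (I : A -> Prop) : B -> Prop :=
  fun b => exists a, I a /\ f a = b.

Section Eta.
Variables (A B : comNzRingType) (pi : A -> B) (m : A -> Prop) (x : seq A).
Let J := gen x.
Let n := img pi m.

(* eta_i : RR(m^(i+1)) / J RR(m^i) -> RR(n^(i+1)) / Jbar RR(n^i),  p |-> pi p *)
Definition eta_injective (i : nat) :=
  forall p, rr m i.+1 p -> idmul (img pi J) (rr n i) (pi p) -> idmul J (rr m i) p.

Definition eta_surjective (i : nat) :=
  forall q, rr n i.+1 q -> exists p, rr m i.+1 p /\ idmul (img pi J) (rr n i) (q - pi p).
End Eta.

From mathcomp Require Import all_boot all_order all_algebra.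
From mathcomp Require Import zify.
Local Open Scope ring_scope.
Import GRing.Theory.
Set Implicit Arguments.
Unset Strict Implicit.

(* The heart of the argument is a colon property of the superficial element
   x = x_1: if x * c lies in the Ratliff-Rush closure of m^(s+1), then c lies
   in that of m^s (Lemma [rr_colon]).  Given this, injectivity of eta_s when
   the images of RR(m^s) and RR(n^s) agree goes as follows: an element p of
   RR(m^(s+1)) whose image lies in Jbar RR(n^s) = Jbar pi(RR(m^s)) differs
   from some q in J RR(m^s) by an element of ker pi = (x_1), say p - q = x_1 c.
   Since J RR(m^s) is inside RR(m^(s+1)), x_1 c lies in RR(m^(s+1)), hence c
   lies in RR(m^s) and p = q + x_1 c belongs to J RR(m^s).  Surjectivity when
   the images of RR(m^(s+1)) and RR(n^(s+1)) agree is immediate: every element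
   of RR(n^(s+1)) is the image of an element of RR(m^(s+1)). *)

Section IdealAlgebra.
Variable R : comNzRingType.
Implicit Types (I K m : R -> Prop).

Lemma idmul0 I K : I 0 -> idmul I K 0.
Proof.
move=> I0; exists 0%N, (fun _ => 0), (fun _ => 0).
by split=> //; split; [case | rewrite big_ord0].
Qed.

Lemma idmul1 I K u v : I u -> K v -> idmul I K (u * v).
Proof.
move=> Iu Kv; exists 1%N, (fun _ => u), (fun _ => v).
by split=> //; split; last rewrite big_ord1.
Qed.

Lemma idmul_add I K a b : idmul I K a -> idmul I K b -> idmul I K (a + b).
Proof.
move=> [n1 [a1 [b1 [Ia1 [Kb1 ->]]]]] [n2 [a2 [b2 [Ia2 [Kb2 ->]]]]].
exists (n1 + n2)%N,
  (fun i => match split i with inl j => a1 j | inr j => a2 j end),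
  (fun i => match split i with inl j => b1 j | inr j => b2 j end).
split; first by move=> i; case: split.
split; first by move=> i; case: split.
rewrite big_split_ord /=; congr (_ + _); apply: eq_bigr => i _.
  by rewrite (unsplitK (inl i)).
by rewrite (unsplitK (inr i)).
Qed.

Lemma idmul_monor I K K' a : (forall b, K' b -> K b) -> idmul I K' a -> idmul I K a.
Proof.
move=> sK'K [n [a1 [b1 [Ia1 [Kb1 ->]]]]].
by exists n, a1, b1; split=> //; split=> // i; apply: sK'K.
Qed.

Lemma idmul_subr I K a : is_ideal K -> idmul I K a -> K a.
Proof.
move=> [K0 [KD KM]] [n [a1 [b1 [_ [Kb1 ->]]]]].
by elim/big_ind: _ => // i _; apply: KM.
Qed.

Lemma idpow_ideal m n : is_ideal m -> is_ideal (idpow m n).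
Proof.
move=> [m0 [_ mM]]; case: n => [|n] /=; first by [].
split; first exact: idmul0.
split; first exact: idmul_add.
move=> r _ [k [a [b [ma [Pb ->]]]]]; exists k, (fun i => r * a i), b.
split; first by move=> i; apply: mM.
by split=> //; rewrite mulr_sumr; apply: eq_bigr => i _; rewrite mulrA.
Qed.

Lemma idpow_shift m k N t : is_ideal m ->
  (forall y, idpow m k y -> idpow m N (t * y)) ->
  forall j y, idpow m (j + k) y -> idpow m (j + N) (t * y).
Proof.
move=> Hm tkN; elim=> [|j IHj] y /=; first by rewrite !add0n; apply: tkN.
move=> [n [a [b [ma [Pb ->]]]]]; rewrite mulr_sumr.
elim/big_ind: _ => [||i _]; first by apply: idmul0; case: Hm.
  exact: idmul_add.
by rewrite mulrCA; apply: idmul1 => //; apply: IHj.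
Qed.

Lemma idpow_mono m j c y : is_ideal m -> idpow m (j + c) y -> idpow m c y.
Proof.
move=> Hm; elim: j y => [|j IHj] y /=; first by rewrite add0n.
move=> Py; apply: (idmul_subr (I := m) (idpow_ideal c Hm)).
by apply: idmul_monor Py => b; apply: IHj.
Qed.

Lemma rr_ideal m s : is_ideal m -> is_ideal (rr m s.+1).
Proof.
move=> Hm; have powD N := (idpow_ideal N Hm).2.1.
have powM N := (idpow_ideal N Hm).2.2.
split.
  by exists 1%N; split=> // y _; rewrite mul0r; case: (idpow_ideal (s.+1 + 1) Hm).
split.
  move=> a b [k1 [k1p Ha]] [k2 [k2p Hb]]; exists (k1 + k2)%N; split; first lia.
  move=> y Py; rewrite mulrDl; apply: powD.
    have -> : (s.+1 + (k1 + k2) = k2 + (s.+1 + k1))%N by lia.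
    by apply: (idpow_shift Hm Ha); rewrite addnC.
  by rewrite addnCA; apply: (idpow_shift Hm Hb).
move=> r a [k [kp Ha]]; exists k; split=> // y Py.
by rewrite -mulrA; apply: powM; apply: Ha.
Qed.

Lemma rr_mul m s a r : is_ideal m -> m a -> rr m s r -> rr m s.+1 (a * r).
Proof.
move=> Hm ma; case: s => [_ | s [k [kp Hr]]].
  exists 1%N; split=> // y Py; rewrite -mulrA; apply: idmul1 => //.
  by have [_ [_ PM]] := idpow_ideal 1 Hm; apply: PM.
by exists k; split=> // y Py; rewrite -mulrA addSn; apply: idmul1 => //; apply: Hr.
Qed.

Lemma idmul_rr I m s a : is_ideal m -> (forall b, I b -> m b) ->
  idmul I (rr m s) a -> rr m s.+1 a.
Proof.
move=> Hm sIm [n [a1 [b1 [Ia1 [Rb1 ->]]]]].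
have [R0 [RD _]] := rr_ideal s Hm.
by elim/big_ind: _ => // i _; apply: rr_mul => //; apply: sIm.
Qed.

Lemma superficial_nil m x : superficial_mod (gen [::]) m x ->
  exists c n0 : nat, forall n, (n0 <= n)%N -> forall a,
    idpow m n.+1 (x * a) -> idpow m c a -> idpow m n a.
Proof.
have gen_nil (a : R) : gen [::] a -> a = 0 by move=> [c ->]; rewrite big_ord0.
have idadd_nil I a : I a -> idadd I (gen [::]) a.
  move=> Ia; exists a, 0; split=> //; split; last by rewrite addr0.
  by exists (fun _ => 0); rewrite big_ord0.
move=> [_ [c [n0 Hx]]]; exists c, n0 => n n0n a Pxa Pa.
have [u [v [Pu [/gen_nil v0 Ea]]]] :=
  (Hx n n0n a).1 (conj (idadd_nil _ _ Pxa) (idadd_nil _ _ Pa)).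
by rewrite Ea v0 addr0.
Qed.

Lemma rr_colon m x s c : is_ideal m -> superficial_mod (gen [::]) m x ->
  rr m s.+1 (x * c) -> rr m s c.
Proof.
move=> Hm /superficial_nil [e [n0 Hx]]; case: s => [//| s] [k [kp Hk]].
exists (e + n0 + k)%N; split; first lia.
move=> y Py.
have Pxcy := idpow_shift Hm Hk Py.
have Pcy : idpow m e (c * y).
  have [_ [_ PM]] := idpow_ideal e Hm; apply: PM.
  by apply: (idpow_mono (j := (n0 + k)%N)) => //; rewrite addnC addnA.
apply: (Hx _ _ _ _ Pcy); first lia.
by rewrite mulrA; move: Pxcy; congr (idpow m _ _); lia.
Qed.

Lemma gen_head (s : seq R) : gen s (head 0 s).
Proof.
case: s => [| h s] /=; first by exists (fun _ => 0); rewrite big_ord0.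
exists (fun j : 'I_(size s).+1 => (j == ord0)%:R).
rewrite big_ord_recl /= mul1r big1 ?addr0 // => j _.
by rewrite mul0r.
Qed.

Lemma gen_sub m (s : seq R) a : is_ideal m ->
  (forall i, (i < size s)%N -> m s`_i) -> gen s a -> m a.
Proof.
move=> [m0 [mD mM]] ms [c ->]; elim/big_ind: _ => // i _.
by apply: mM; apply: ms.
Qed.

End IdealAlgebra.

Section Lifting.
Variables (A B : comNzRingType) (pi : {rmorphism A -> B}).

Lemma idmul_img (I K : A -> Prop) b :
  idmul (img pi I) (img pi K) b -> exists a, idmul I K a /\ pi a = b.
Proof.
move=> [n [u [v [Iu [Kv ->]]]]].
have /fin_all_exists [f Hf] : forall i, exists ab : A * A,
    [/\ I ab.1, K ab.2, pi ab.1 = u i & pi ab.2 = v i].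
  move=> i; have [a [Ia <-]] := Iu i; have [a' [Ka' <-]] := Kv i.
  by exists (a, a').
exists (\sum_(i < n) (f i).1 * (f i).2); split.
  exists n, (fun i => (f i).1), (fun i => (f i).2).
  by split; [move=> i; case: (Hf i) | split=> // i; case: (Hf i)].
by rewrite rmorph_sum; apply: eq_bigr => i _; rewrite rmorphM; case: (Hf i) => _ _ -> ->.
Qed.

Variables (m : A -> Prop) (x : seq A).
Hypothesis ideal_m : is_ideal m.
Hypothesis J_in_m : forall a, gen x a -> m a.
Hypothesis superficial_head : superficial_mod (gen [::]) m (head 0 x).
Hypothesis ker_pi : forall a, pi a = 0 <-> gen [:: head 0 x] a.

Lemma eta_injective_of_rr s :
  (forall b, img pi (rr m s) b <-> rr (img pi m) s b) -> eta_injective pi m x s.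
Proof.
move=> rr_s p Rp /(idmul_monor (fun b => (rr_s b).2)) /idmul_img [q [Jq piq]].
have /ker_pi [cc] : pi (p - q) = 0 by rewrite rmorphB piq subrr.
rewrite big_ord1 /= mulrC => Ep; set c := cc ord0 in Ep.
have Rxc : rr m s.+1 (head 0 x * c).
  have [_ [RD RM]] := rr_ideal s ideal_m.
  rewrite -Ep; apply: RD => //; rewrite -mulN1r; apply: RM.
  exact: idmul_rr ideal_m J_in_m Jq.
have -> : p = q + head 0 x * c by rewrite -Ep addrC subrK.
apply: idmul_add Jq (idmul1 (gen_head x) _).
exact: rr_colon ideal_m superficial_head Rxc.
Qed.

Lemma eta_surjective_of_rr s :
  (forall b, img pi (rr m s.+1) b <-> rr (img pi m) s.+1 b) -> eta_surjective pi m x s.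
Proof.
move=> rr_s1 _ /rr_s1 [p [Rp <-]]; exists p; split=> //.
rewrite subrr; apply: idmul0; exists 0; split; last exact: rmorph0.
by exists (fun _ => 0); rewrite big1 // => i _; rewrite mul0r.
Qed.

End Lifting.

Theorem mainTheorem7 (A : comNzRingType) (m : A -> Prop) (d : nat) (x : seq A)
  (B : comNzRingType) (pi : {rmorphism A -> B}) :
  cohen_macaulay m -> krull_dim A d -> (2 <= d)%N -> infinite_residue_field m ->
  size x = d -> superficial_seq m x ->
  (forall b : B, exists a : A, pi a = b) ->
  (forall a : A, pi a = 0 <-> gen [:: head 0 x] a) ->
  (forall s : nat,
     (forall b, img pi (rr m s) b <-> rr (img pi m) s b) ->
     eta_injective pi m x s) /\
  (forall s : nat,
     (forall b, img pi (rr m s) b <-> rr (img pi m) s b) ->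
     (forall b, img pi (rr m s.+1) b <-> rr (img pi m) s.+1 b) ->
     eta_injective pi m x s /\ eta_surjective pi m x s).
Proof.
move=> [[_ [ideal_m _]] _] _ d_ge2 _ size_x sup_x _ ker_pi.
have x_nonempty : (0 < size x)%N by rewrite size_x; apply: leq_trans d_ge2.
have J_in_m a : gen x a -> m a.
  by apply: gen_sub ideal_m _ => i /sup_x [].
have sup_head : superficial_mod (gen [::]) m (head 0 x).
  by have := sup_x 0%N x_nonempty; rewrite take0 nth0.
have inj := eta_injective_of_rr ideal_m J_in_m sup_head ker_pi.
split=> // s rr_s rr_s1; split; first exact: inj.
exact: eta_surjective_of_rr.
Qed.
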